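(* Let $G$ be a chordal graph, $X\subsetneq V(G)$ a clique, and $L_1,\dots,L_t$ the evaporation sequence of $G$ with exception set $X$. Let $C=V(G)\setminus X$. If $G\setminus X$ is connected, then $N(C)=N(L_t)\cap X$.
   Context: A vertex is simplicial if its neighborhood is a clique. For a chordal graph $G$ and a clique $X\subseteq V(G)$ (possibly empty), the evaporation sequence of $G$ with exception set $X$ is defined recursively: if $X=V(G)$ it is the empty sequence; otherwise let $L_1$ be the set of simplicial vertices of $G$ that are not in $X$ (this set is always nonempty), and the evaporation sequence is $L_1$ followed by the evaporation sequence of $G-L_1$ with exception set $X$. For $S\subseteq V(G)$, $N(S)$ denotes the set of vertices not in $S$ that are adjacent to some vertex of $S$. *)

(* A simple graph is a symmetric irreflexive relation e on a
   finite type T; its vertex set V(G) is the whole of T. *)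
From mathcomp Require Import all_boot.
Set Implicit Arguments. Unset Strict Implicit. Unset Printing Implicit Defensive.

Section Graphs.
Variables (T : finType) (e : rel T).

Definition simple_graph : Prop := symmetric e /\ irreflexive e.

Definition is_clique (X : {set T}) : Prop :=
  forall x y, x \in X -> y \in X -> x != y -> e x y.

(* Chordal: every cycle of length at least 4 (given as the sequence of its
   distinct vertices x :: s, consecutive ones adjacent, last adjacent to x)
   has a chord, i.e. an edge between two non-consecutive vertices. *)
Definition chordal : Prop :=
  forall (x : T) (s : seq T), uniq (x :: s) -> 3 <= size s -> cycle e (x :: s) ->
    exists i j, [/\ i < j, j <= size s, i.+1 != j,
                    ~~ ((i == 0) && (j == size s)) &
                    e (nth x (x :: s) i) (nth x (x :: s) j)].

Definition simplicial_in (S : {set T}) (v : T) : bool :=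
  (v \in S) && [forall x, forall y,
     [&& x \in S, y \in S, e v x, e v y & x != y] ==> e x y].

Definition evap_layer (X S : {set T}) : {set T} :=
  [set v in S :\: X | simplicial_in S v].

Inductive is_evap (X : {set T}) : {set T} -> seq {set T} -> Prop :=
  | evap_done : is_evap X X [::]
  | evap_step S Ls : S != X -> is_evap X (S :\: evap_layer X S) Ls ->
                     is_evap X S (evap_layer X S :: Ls).

Definition nbhd (S : {set T}) : {set T} :=
  [set v | (v \notin S) && [exists u in S, e u v]].

Definition connected_in (C : {set T}) : Prop :=
  C != set0 /\
  forall x y, x \in C -> y \in C ->
    connect [rel a b | [&& e a b, a \in C & b \in C]] x y.
End Graphs.

From mathcomp Require Import all_boot.
Set Implicit Arguments. Unset Strict Implicit.

(* The proof peels off one layer at a time.  Removing the first layer L of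
   G[S] (all simplicial vertices of G[S] outside X) keeps G[S \ X]
   connected and keeps every vertex x of X adjacent to what remains: a path
   through a simplicial vertex v can shortcut v, since the two neighbours of
   v on the path are adjacent.  Chordality only guarantees
   that the evaporation sequence exists; here it is given as a hypothesis. *)

Section Evaporation.
Variables (T : finType) (e : rel T).
Hypothesis e_sym : symmetric e.

Definition induced (D : {set T}) : rel T :=
  [rel a b | [&& e a b, a \in D & b \in D]].

Lemma simplicial_adj S v x y : simplicial_in e S v -> x \in S -> y \in S ->
  e v x -> e v y -> x != y -> e x y.
Proof.
case/andP=> _ /forallP/(_ x)/forallP/(_ y)/implyP simp xS yS vx vy xy.
by apply: simp; rewrite xS yS vx vy xy.
Qed.

Section OneLayer.
Variables (X S : {set T}).

Local Notation L := (evap_layer e X S).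
Local Notation D := (S :\: X).
Local Notation D' := (S :\: L :\: X).

Lemma layer_simplicial v : v \in L -> simplicial_in e S v.
Proof. by rewrite inE => /andP[]. Qed.

Lemma layer_sub : L \subset D.
Proof. by apply/subsetP => v; rewrite inE => /andP[]. Qed.

Lemma remaining_sub : D' \subset D.
Proof. by apply/subsetP => v; rewrite !inE => /and3P[-> _ ->]. Qed.

(* Shortcutting the layer: a path in G[D] from a to a vertex outside L yields
   a vertex a' outside L, joined in G[D'] to the same endpoint, which is a
   itself when a is not in L and a neighbour of a when a is in L. *)
Lemma reroute_path a p : path (induced D) a p -> last a p \in D' ->
  exists2 a', a' \in D' &
    [/\ connect (induced D') a' (last a p),
        a \in L -> e a a' & a \notin L -> a' = a].
Proof.
elim: p a => [|y p IH] a /=.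
  by move=> _ aD'; exists a => //; split=> // aL; move: aD'; rewrite !in_setD aL andbF.
case/andP=> /and3P[eay aD yD] py lastD'.
have [y' y'D' [y'conn yLe yNL]] := IH y py lastD'.
have aS : a \in S by move: aD; rewrite inE => /andP[].
have y'S : y' \in S by move: y'D'; rewrite !inE => /and3P[].
have y'L : y' \notin L by move: y'D'; rewrite !inE => /and3P[_ /negP/negP ->].
have via_y w : y \in L -> w \in S -> e y w -> w != y' -> e w y'.
  move=> yL wS eyw; exact: simplicial_adj (layer_simplicial yL) wS y'S eyw (yLe yL).
have [aL | aL] := boolP (a \in L).
- have [yL | yL] := boolP (y \in L).
  + exists y' => //; split=> // _.
    apply: via_y => //; first by rewrite e_sym.
    by apply: contraNneq y'L => <-.
  + by rewrite (yNL yL) in y'D' y'conn; exists y.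
- have aD' : a \in D' by move: aD; rewrite !in_setD aL => /andP[-> ->].
  exists a => //; split=> [|aL'|//]; last by case/negP: aL.
  apply: connect_trans y'conn; have [yL | yL] := boolP (y \in L).
  + have [-> // | ay'] := eqVneq a y'.
    by apply: connect1; rewrite /induced /= aD' y'D' via_y // e_sym.
  + by rewrite (yNL yL) in y'D' *; apply: connect1; rewrite /induced /= aD' y'D' eay.
Qed.

Lemma connected_after_layer :
  connected_in e D -> D' != set0 -> connected_in e D'.
Proof.
move=> [_ conD] D'ne; split=> // a b aD' bD'.
have [p pD bE] := connectP (conD a b (subsetP remaining_sub a aD')
                                     (subsetP remaining_sub b bD')).
rewrite bE in bD' *.
have [a' _ [conn _ aEq]] := reroute_path pD bD'.
have aL : a \notin L by move: aD'; rewrite !in_setD => /and3P[_ ->].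
by rewrite -{1}(aEq aL).
Qed.

Lemma neighbour_after_layer x c : connected_in e D -> D' != set0 ->
  x \in S -> x \in X -> c \in D -> e c x -> exists2 c', c' \in D' & e c' x.
Proof.
move=> [_ conD] /set0Pn[b bD'] xS xX cD ecx.
have [cL | cL] := boolP (c \in L); last first.
  by exists c => //; move: cD; rewrite !in_setD cL => /andP[-> ->].
have [p pD bE] := connectP (conD c b cD (subsetP remaining_sub b bD')).
rewrite bE in bD'; have [c' c'D' [_ ecc' _]] := reroute_path pD bD'.
exists c' => //.
have c'S : c' \in S by move: c'D'; rewrite !inE => /and3P[].
apply: simplicial_adj (layer_simplicial cL) c'S xS (ecc' cL) ecx _.
by apply: contraTneq c'D' => ->; rewrite !inE xX.
Qed.

End OneLayer.

Lemma evap_nil X S : is_evap e X S [::] -> S = X.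
Proof. by move=> H; inversion H. Qed.

Lemma evap_cons X S L Ls : is_evap e X S (L :: Ls) -> S != X.
Proof. by move=> H; inversion H. Qed.

Lemma evap_exception_sub X S Ls : is_evap e X S Ls -> X \subset S.
Proof.
elim=> [|S' Ls' _ _ IH]; first exact: subxx.
by apply: subset_trans IH _; apply: subsetDl.
Qed.

Lemma evap_last_sub X S Ls : is_evap e X S Ls -> last set0 Ls \subset S :\: X.
Proof.
elim=> [|S' [|L' Ls'] _ _ IH] /=; first exact: sub0set; first exact: layer_sub.
by apply: subset_trans IH _; apply/subsetP => v; rewrite !inE => /and3P[-> _ ->].
Qed.

Lemma last_layer_neighbour X S Ls : is_evap e X S Ls -> S != X ->
  connected_in e (S :\: X) -> forall x c, x \in X -> c \in S :\: X -> e c x ->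
  exists2 d, d \in last set0 Ls & e d x.
Proof.
elim=> [|S' Ls' _ ev IH]; first by rewrite eqxx.
move=> _ con x c xX cD ecx.
set L := evap_layer e X S'.
case: Ls' ev IH => [|L' Ls'] ev IH /=.
  exists c => //; apply: contraTT cD => cL.
  by rewrite in_setD -(evap_nil ev) in_setD cL; case: (c \in S').
have Xsub := evap_exception_sub ev.
have D'ne : S' :\: L :\: X != set0.
  rewrite setD_eq0; apply: contra (evap_cons ev) => sub.
  by rewrite eqEsubset sub.
have xS : x \in S' by move: (subsetP Xsub x xX); rewrite inE => /andP[].
have [c' c'D' ec'x] := neighbour_after_layer con D'ne xS xX cD ecx.
exact: IH (evap_cons ev) (connected_after_layer con D'ne) x c' xX c'D' ec'x.
Qed.

End Evaporation.

Theorem lemma5p8 (T : finType) (e : rel T) (X : {set T}) (Ls : seq {set T}) :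
  simple_graph e -> chordal e ->
  is_clique e X -> X \proper [set: T] ->
  is_evap e X [set: T] Ls ->
  connected_in e ([set: T] :\: X) ->
  nbhd e ([set: T] :\: X) = nbhd e (last set0 Ls) :&: X.
Proof.
move=> [e_sym _] _ _ Xproper ev con.
have TneX : [set: T] != X by apply: contraTneq Xproper => <-; rewrite properxx.
have lastC := subsetP (evap_last_sub ev).
apply/setP => v; rewrite !inE andbT negbK.
apply/idP/idP.
- case/andP=> vX /existsP[c /andP[cC ecv]].
  have [d dL edv] := last_layer_neighbour e_sym ev TneX con vX cC ecv.
  rewrite vX andbT; apply/andP; split; last by apply/existsP; exists d; rewrite dL.
  by apply: contraTN vX => /lastC; rewrite !inE andbT.
- case/andP=> /andP[_ /existsP[d /andP[dL edv]]] vX.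
  by rewrite vX; apply/existsP; exists d; rewrite lastC.
Qed.
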